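(* Let $C_0>0$. There exist constants $c,C>0$ depending only on $C_0$ such that the following holds. Let $n>2f\ge0$, $\mathcal{B}\subset[n]$ with $|\mathcal{B}|=f$, $\mathcal{H}=[n]\setminus\mathcal{B}$, and let honest losses $\mathcal{L}_i$, $i\in\mathcal{H}$, be differentiable and satisfy $(G,0)$-heterogeneity, i.e. $\frac{1}{|\mathcal{H}|}\sum_{i\in\mathcal{H}}\|\nabla\mathcal{L}_i(x)-\nabla\mathcal{L}_{\mathcal{H}}(x)\|^2\le G^2$ for all $x$. Assume $\mathcal{L}_{\mathcal{H}}=\frac1{|\mathcal{H}|}\sum_{i\in\mathcal{H}}\mathcal{L}_i$ is $\mu$-strongly convex and $L$-smooth, with minimizer $x^*$, and set $\kappa=L/\mu$. Let $F$ be an $(f,\nu)$-robust aggregation rule with $\nu\le C_0\frac{f}{n-2f}$. Run the fast gradient method (see context) where at each iterate $x_k$ the oracle $g(x_k)$ is $F(g_1,\dots,g_n)$ with $g_i=\nabla\mathcal{L}_i(x_k)$ for $i\in\mathcal{H}$ and $g_i$ arbitrary for $i\in\mathcal{B}$. Then for every $\varepsilon>0$ and every $k\ge c\sqrt{\kappa}\,\big(1+\log_+\big(L\|x_0-x^*\|^2/\varepsilon\big)\big)$, $$\mathcal{L}_{\mathcal{H}}(y_k)-\mathcal{L}_{\mathcal{H}}(x^* )\le \varepsilon+C\,\frac{\sqrt{\kappa}}{\mu}\,\frac{f}{n-2f}\,G^2 .$$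
   Context: $(f,\nu)$-robust aggregation rule: a map $F:\mathbb{R}^{d\times n}\to\mathbb{R}^d$ such that for all $x_1,\dots,x_n$ and every $S\subset[n]$ with $|S|=n-f$, $\|F(x_1,\dots,x_n)-\bar x_S\|^2\le \nu\frac{1}{|S|}\sum_{i\in S}\|x_i-\bar x_S\|^2$, $\bar x_S=\frac{1}{|S|}\sum_{i\in S}x_i$. Fast gradient method (with $\tilde L=2L$, $\tilde\mu=\mu/2$): $\gamma_0=1$, $\Gamma_k=\sum_{i=0}^k\gamma_i$, $\gamma_{k+1}>0$ defined by $2L+\frac{\mu}{2}\Gamma_k=\frac{2L\gamma_{k+1}^2}{\Gamma_{k+1}}$, $\tau_k=\gamma_{k+1}/\Gamma_{k+1}$. For $k\ge0$: $y_k=x_k-\frac1{2L}g(x_k)$; $z_k=\arg\min_x\{L\|x-x_0\|^2+\sum_{i=0}^k\gamma_i[\langle g(x_i),x-x_i\rangle+\frac{\mu}{4}\|x-x_i\|^2]\}$; $x_{k+1}=(1-\tau_k)y_k+\tau_kz_k$. $\log_+(t)=\max(\log t,0)$. *)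

From HB Require Import structures.
From mathcomp Require Import all_boot all_order all_algebra.
From mathcomp Require Import all_classical all_reals all_analysis.
Unset Printing Implicit Defensive.
Import Order.TTheory GRing.Theory Num.Theory.
Import numFieldNormedType.Exports.
Local Open Scope ring_scope.

Definition dotv {R : realType} {d : nat} (u v : 'rV[R]_d) : R :=
  \sum_(j < d) u 0 j * v 0 j.
Definition norm2 {R : realType} {d : nat} (u : 'rV[R]_d) : R := dotv u u.
Definition enorm {R : realType} {d : nat} (u : 'rV[R]_d) : R := Num.sqrt (norm2 u).

Definition logp {R : realType} (t : R) : R := Num.max (ln t) 0.

Definition is_gradient {R : realType} {d : nat}
  (f : 'rV[R]_d -> R) (gf : 'rV[R]_d -> 'rV[R]_d) : Prop :=
  forall x, differentiable f x /\ forall v, 'd f x v = dotv (gf x) v.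

Definition strongly_convex {R : realType} {d : nat} (mu : R) (f : 'rV[R]_d -> R) : Prop :=
  forall x y (t : R), 0 <= t -> t <= 1 ->
    f (t *: x + (1 - t) *: y) <=
      t * f x + (1 - t) * f y - mu / 2 * t * (1 - t) * norm2 (x - y).

Definition Lsmooth {R : realType} {d : nat} (L : R) (f : 'rV[R]_d -> R) : Prop :=
  exists gf, is_gradient f gf /\
    forall x y, enorm (gf x - gf y) <= L * enorm (x - y).

Definition avgS {R : realType} {d n : nat} (S : {set 'I_n}) (v : 'I_n -> 'rV[R]_d) : 'rV[R]_d :=
  (#|S|%:R)^-1 *: \sum_(i in S) v i.

Definition robust_agg {R : realType} {d : nat} (n f : nat) (nu : R)
  (F : ('I_n -> 'rV[R]_d) -> 'rV[R]_d) : Prop :=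
  forall (v : 'I_n -> 'rV[R]_d) (S : {set 'I_n}), #|S| = (n - f)%N ->
    norm2 (F v - avgS S v) <=
      nu * ((#|S|%:R)^-1 * \sum_(i in S) norm2 (v i - avgS S v)).

From HB Require Import structures.
From mathcomp Require Import all_boot all_order all_algebra.
From mathcomp Require Import all_classical all_reals all_analysis.
From mathcomp Require Import ring lra.
Import Order.TTheory GRing.Theory Num.Theory.
Import numFieldNormedType.Exports.
Local Open Scope ring_scope.

(* The robust aggregate is within squared distance nu G^2 <= C0 f/(n-2f) G^2 of
   the honest average gradient, so the method runs with a delta-inexact gradient
   oracle.  In Nesterov's estimate-sequence analysis of the fast gradient method,
   half of the strong convexity absorbs the oracle error, which then costs
   O(delta/mu) per unit of weight:
     Gam_k (f(y_k) - f(xstar)) <= L |x_0 - xstar|^2 + O(delta/mu) sum_(i<=k) Gam_i.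
   The recursion defining gamma gives sum_(i<=k) Gam_i <= (1 + 2 sqrt kappa) Gam_k,
   so the total error stays O(sqrt kappa delta/mu), while
   Gam_k >= (1 + 1/(2 sqrt kappa))^k makes the first term smaller than eps after
   O(sqrt kappa (1 + log_+ (L |x_0 - xstar|^2/eps))) steps. *)

Section InnerProduct.
Context {R : realType} {d : nat}.
Implicit Types (u v w : 'rV[R]_d) (a b : R).

Lemma dotvC u v : dotv u v = dotv v u.
Proof. by apply: eq_bigr => j _; rewrite mulrC. Qed.

Lemma dotvDl u v w : dotv (u + v) w = dotv u w + dotv v w.
Proof. by rewrite /dotv -big_split; apply: eq_bigr => j _; rewrite !mxE mulrDl. Qed.

Lemma dotvZl a u w : dotv (a *: u) w = a * dotv u w.
Proof. by rewrite /dotv mulr_sumr; apply: eq_bigr => j _; rewrite !mxE mulrA. Qed.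

Lemma dotvNl u w : dotv (- u) w = - dotv u w.
Proof. by rewrite -scaleN1r dotvZl mulN1r. Qed.

Lemma dotv0l w : dotv 0 w = 0.
Proof. by rewrite -(scale0r 0) dotvZl mul0r. Qed.

Lemma dotvBl u v w : dotv (u - v) w = dotv u w - dotv v w.
Proof. by rewrite dotvDl dotvNl. Qed.

Lemma dotvDr u v w : dotv w (u + v) = dotv w u + dotv w v.
Proof. by rewrite dotvC dotvDl !(dotvC w). Qed.

Lemma dotvZr a u w : dotv w (a *: u) = a * dotv w u.
Proof. by rewrite dotvC dotvZl dotvC. Qed.

Lemma dotvNr u w : dotv w (- u) = - dotv w u.
Proof. by rewrite dotvC dotvNl dotvC. Qed.

Lemma dotvBr u v w : dotv w (u - v) = dotv w u - dotv w v.
Proof. by rewrite dotvDr dotvNr. Qed.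

Lemma dotv_suml (I : Type) (r : seq I) (P : pred I) (F : I -> 'rV[R]_d) v :
  dotv (\sum_(i <- r | P i) F i) v = \sum_(i <- r | P i) dotv (F i) v.
Proof. exact: (big_morph (dotv^~ v) (fun s t => dotvDl s t v) (dotv0l v)). Qed.

Lemma norm2_ge0 u : 0 <= norm2 u.
Proof. by apply: sumr_ge0 => j _; rewrite -expr2 sqr_ge0. Qed.

Lemma norm2_eq0 u : norm2 u = 0 -> u = 0.
Proof.
move=> /psumr_eq0P u0; apply/rowP => j; rewrite mxE.
have /eqP := u0 (fun j _ => ltac:(by rewrite -expr2 sqr_ge0)) j isT.
by rewrite mulf_eq0 orbb => /eqP.
Qed.

Lemma dotv_eq_row u u' : (forall v, dotv u v = dotv u' v) -> u = u'.
Proof.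
move=> E; apply/eqP; rewrite -subr_eq0; apply/eqP/norm2_eq0.
by rewrite /norm2 dotvBl !E subrr.
Qed.

Lemma norm2N u : norm2 (- u) = norm2 u.
Proof. by rewrite /norm2 dotvNl dotvNr opprK. Qed.

Lemma norm2D u v : norm2 (u + v) = norm2 u + norm2 v + 2 * dotv u v.
Proof. rewrite /norm2 dotvDl !dotvDr (dotvC v u); ring. Qed.

Lemma norm2B u v : norm2 (u - v) = norm2 u + norm2 v - 2 * dotv u v.
Proof. by rewrite norm2D norm2N dotvNr mulrN. Qed.

Lemma norm2Z a u : norm2 (a *: u) = a ^+ 2 * norm2 u.
Proof. rewrite /norm2 dotvZl dotvZr; ring. Qed.

Lemma norm2_subC u v : norm2 (u - v) = norm2 (v - u).
Proof. by rewrite -norm2N opprB. Qed.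

Lemma norm2_sub_via w v p :
  norm2 (w - p) = norm2 (v - p) + norm2 (w - v) + 2 * dotv (v - p) (w - v).
Proof.
have -> : w - p = (w - v) + (v - p) by rewrite addrA subrK.
by rewrite norm2D (dotvC (w - v)); ring.
Qed.

Lemma dotv_young a u v : 0 < a -> dotv u v <= a * norm2 v + norm2 u / (4 * a).
Proof.
move=> a0; have := norm2_ge0 (u - (2 * a) *: v).
rewrite norm2B norm2Z dotvZr -(@ler_pM2r _ (4 * a)^-1) ?invr_gt0 ?mulr_gt0 //.
have -> : (norm2 u + (2 * a) ^+ 2 * norm2 v - 2 * (2 * a * dotv u v)) / (4 * a)
    = a * norm2 v + norm2 u / (4 * a) - dotv u v by field; rewrite lt0r_neq0.
by rewrite mul0r subr_ge0.
Qed.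

Lemma dotv_le_of_norm2_le b u v :
  0 < b -> norm2 u <= b ^+ 2 * norm2 v -> dotv u v <= b * norm2 v.
Proof.
move=> b0 uv; have b20 : 0 < b / 2 by rewrite divr_gt0.
apply: le_trans (dotv_young _ u v b20) _.
have : norm2 u / (4 * (b / 2)) <= b ^+ 2 * norm2 v / (4 * (b / 2)).
  by rewrite ler_pM2r // invr_gt0 mulr_gt0.
have -> : b ^+ 2 * norm2 v / (4 * (b / 2)) = b / 2 * norm2 v by field; rewrite lt0r_neq0.
lra.
Qed.

Lemma norm2_le_of_enorm_le b u v :
  0 <= b -> enorm u <= b * enorm v -> norm2 u <= b ^+ 2 * norm2 v.
Proof.
rewrite /enorm => b0 uv.
rewrite -(sqr_sqrtr (norm2_ge0 u)) -(sqr_sqrtr (norm2_ge0 v)) -exprMn.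
by rewrite lerXn2r ?nnegrE ?mulr_ge0 ?sqrtr_ge0.
Qed.

End InnerProduct.

Lemma ler_of_le_add_scaled (R : realFieldType) (a b c : R) :
  0 <= c -> (forall t, 0 < t -> t <= 1 -> a <= b + t * c) -> a <= b.
Proof.
move=> c0 H; rewrite leNgt; apply/negP => ba.
have dpos : 0 < a - b + c by lra.
have t0 : 0 < (a - b) / (a - b + c) by rewrite divr_gt0 // subr_gt0.
have t1 : (a - b) / (a - b + c) <= 1 by rewrite ler_pdivrMr // mul1r; lra.
have := H _ t0 t1; rewrite mulrAC -subr_ge0.
have -> : b + (a - b) * c / (a - b + c) - a = - ((a - b) ^+ 2 / (a - b + c)).
  by field; rewrite lt0r_neq0.
by rewrite oppr_ge0 leNgt divr_gt0 // exprn_gt0 // subr_gt0.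
Qed.

Lemma ler_of_le_add_divn (R : archiFieldType) (a b c : R) :
  (forall N : nat, (0 < N)%N -> a <= b + c / N%:R) -> a <= b.
Proof.
move=> H; rewrite leNgt; apply/negP => ba.
set N := (Num.Def.trunc (`|c| / (a - b))).+1.
have N0 : (0 : R) < N%:R by rewrite ltr0n.
have : `|c| / N%:R < a - b.
  rewrite ltr_pdivrMr // mulrC -ltr_pdivrMr ?subr_gt0 //.
  exact: truncnS_gt.
have := H N isT; have : c / N%:R <= `|c| / N%:R by rewrite ler_pM2r ?invr_gt0 ?ler_norm.
lra.
Qed.

Local Open Scope classical_set_scope.

Lemma diff_le_of_slope_le (R : realType) (d : nat) (f : 'rV[R]_d -> R) (x h : 'rV[R]_d) (M : R) :
  differentiable f x ->
  (forall t : R, 0 < t -> t <= 1 -> t^-1 * (f (x + t *: h) - f x) <= M) ->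
  'd f x h <= M.
Proof.
move=> df hM; rewrite -deriveE //.
have cv : (fun t : R => t^-1 *: ((f \o shift x) (t *: h) - f x)) @ 0^'+ --> 'D_h f x.
  exact/cvg_dnbhs_at_right/diff_derivable.
apply: (cvgr_to_le cv); near=> t.
have t0 : 0 < t by near: t; exact: nbhs_right_gt.
have t1 : t <= 1 by near: t; exact: nbhs_right_le.
by rewrite /= [_ + x]addrC; exact: hM.
Unshelve. all: by end_near. Qed.

Local Close Scope classical_set_scope.

Section FirstOrderConditions.
Context {R : realType} {d : nat} {f : 'rV[R]_d -> R} {gf : 'rV[R]_d -> 'rV[R]_d}.
Hypothesis gradf : is_gradient f gf.

Lemma segment_combination (x y : 'rV[R]_d) (t : R) : x + t *: (y - x) = t *: y + (1 - t) *: x.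
Proof. by rewrite scalerBr scalerBl scale1r addrCA. Qed.

Lemma convex_first_order {mu : R} : 0 <= mu -> strongly_convex mu f ->
  forall x y, dotv (gf x) (y - x) <= f y - f x.
Proof.
move=> mu0 scf x y; have [df <-] := gradf x.
apply: diff_le_of_slope_le => // t t0 t1.
rewrite segment_combination mulrC ler_pdivrMr // mulrC.
have := scf y x t (ltW t0) t1.
have : 0 <= mu / 2 * t * (1 - t) * norm2 (y - x).
  by rewrite !mulr_ge0 ?norm2_ge0 ?divr_ge0 ?subr_ge0 // ltW.
lra.
Qed.

Lemma strongly_convex_first_order {mu : R} : 0 <= mu -> strongly_convex mu f ->
  forall x y, f x + dotv (gf x) (y - x) + mu / 2 * norm2 (y - x) <= f y.
Proof.
move=> mu0 scf x y; set q := mu / 2 * norm2 (y - x).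
suff : dotv (gf x) (y - x) <= f y - f x - q by lra.
apply: (@ler_of_le_add_scaled _ _ _ q); first by rewrite mulr_ge0 ?norm2_ge0 ?divr_ge0.
move=> t t0 t1; rewrite -(ler_pM2l t0).
have := convex_first_order mu0 scf x (x + t *: (y - x)).
rewrite addrAC subrr add0r dotvZr segment_combination.
have := scf y x t (ltW t0) t1.
rewrite /q; nra.
Qed.

Section Smooth.
Context {L : R}.
Hypothesis L0 : 0 < L.
Hypothesis lipf : forall x y, enorm (gf x - gf y) <= L * enorm (x - y).

(* Convexity at the far end of a segment of length t, plus the Lipschitz bound
   on the gradient at distance s + t from x. *)
Lemma smooth_segment_step {mu : R} (x h : 'rV[R]_d) (s t : R) :
  0 <= mu -> strongly_convex mu f -> 0 <= s -> 0 < t ->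
  f (x + (s + t) *: h) - f (x + s *: h)
    <= t * dotv (gf x) h + L * (s + t) * t * norm2 h.
Proof.
move=> mu0 scf s0 t0; set b := x + (s + t) *: h.
have := convex_first_order mu0 scf b (x + s *: h).
have -> : x + s *: h - b = - (t *: h).
  by rewrite /b scalerDl !opprD addrACA subrr add0r addrA subrr add0r.
rewrite dotvNr dotvZr -(subrK (gf x) (gf b)) dotvDl.
have : dotv (gf b - gf x) h <= L * (s + t) * norm2 h.
  apply: dotv_le_of_norm2_le; first by rewrite mulr_gt0 // ltr_wpDl.
  have := norm2_le_of_enorm_le _ _ _ (ltW L0) (lipf b x).
  by rewrite /b addrAC subrr add0r norm2Z exprMn mulrA.
nra.
Qed.

(* Telescoping over N equal steps of [x, y] gives the bound up to L/(2N) |y - x|^2. *)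
Lemma descent_lemma {mu : R} : 0 <= mu -> strongly_convex mu f ->
  forall x y, f y <= f x + dotv (gf x) (y - x) + L / 2 * norm2 (y - x).
Proof.
move=> mu0 scf x y; set h := y - x; set D := dotv (gf x) h; set N2 := norm2 h.
apply: (@ler_of_le_add_divn _ _ _ (L / 2 * N2)) => N N0.
have n0 : (0 : R) < N%:R by rewrite ltr0n.
have telescope : forall m, f (x + (m%:R / N%:R) *: h) - f x
    <= m%:R / N%:R * D + L * N2 * (m%:R * (m%:R + 1)) / (2 * N%:R ^+ 2).
  elim => [|m IH]; first by rewrite !mul0r scale0r addr0 subrr mulr0 mul0r addr0.
  have := smooth_segment_step x h (m%:R / N%:R) N%:R^-1 mu0 scf.
  rewrite divr_ge0 ?invr_gt0 // => /(_ isT n0).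
  have -> : m%:R / N%:R + N%:R^-1 = m.+1%:R / N%:R :> R by rewrite -[m.+1]addn1 natrD mulrDl mul1r.
  have -> : m.+1%:R / N%:R * D + L * N2 * (m.+1%:R * (m.+1%:R + 1)) / (2 * N%:R ^+ 2)
      = m%:R / N%:R * D + L * N2 * (m%:R * (m%:R + 1)) / (2 * N%:R ^+ 2)
        + N%:R^-1 * D + L * (m.+1%:R / N%:R) / N%:R * N2 :> R.
    by rewrite -[m.+1]addn1 natrD; field; rewrite lt0r_neq0.
  rewrite -/D -/N2 in IH *; lra.
have := telescope N; rewrite divff ?lt0r_neq0 // scale1r mul1r.
have -> : x + h = y by rewrite /h addrC subrK.
have -> : L * N2 * (N%:R * (N%:R + 1)) / (2 * N%:R ^+ 2) = L / 2 * N2 + L / 2 * N2 / N%:R.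
  by field; rewrite lt0r_neq0.
lra.
Qed.

End Smooth.
End FirstOrderConditions.

Lemma is_derive_sum_gradients {R : realType} {d n : nat} {H : {set 'I_n}}
    {Ls : 'I_n -> 'rV[R]_d -> R} {gL : 'I_n -> 'rV[R]_d -> 'rV[R]_d} (w v : 'rV[R]_d) :
  (forall i, i \in H -> is_gradient (Ls i) (gL i)) ->
  is_derive w v (\sum_(i in H) Ls i) (\sum_(i in H) dotv (gL i w) v).
Proof.
move=> gradL; apply: (big_rec2 (fun F dF => is_derive w v F dF)) => [|i F dF iH dF0].
  exact: is_derive_cst.
apply: is_deriveD => //; have [di <-] := gradL i iH w.
by apply: DeriveDef; [exact: diff_derivable | rewrite deriveE].
Qed.

Lemma is_gradient_avg {R : realType} {d n : nat} {H : {set 'I_n}}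
    {Ls : 'I_n -> 'rV[R]_d -> R} {gL : 'I_n -> 'rV[R]_d -> 'rV[R]_d} {gf : 'rV[R]_d -> 'rV[R]_d} :
  (forall i, i \in H -> is_gradient (Ls i) (gL i)) ->
  is_gradient (fun w => (#|H|%:R)^-1 * \sum_(i in H) Ls i w) gf ->
  forall w, gf w = avgS H (fun i => gL i w).
Proof.
move=> gradL gradf w; apply: dotv_eq_row => v.
have [df <-] := gradf w; rewrite -deriveE //.
have -> : (fun w => (#|H|%:R)^-1 * \sum_(i in H) Ls i w) = (#|H|%:R)^-1 \*: \sum_(i in H) Ls i.
  by apply/funext => u /=; rewrite fct_sumE.
have sumD := is_derive_sum_gradients w v gradL.
have scaleD := is_deriveZ (#|H|%:R)^-1 sumD.
by rewrite derive_val /avgS dotvZl dotv_suml.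
Qed.

Lemma robust_agg_honest_error {R : realType} {d n f : nat} {B : {set 'I_n}}
    {F : ('I_n -> 'rV[R]_d) -> 'rV[R]_d} {gH v : 'I_n -> 'rV[R]_d} {nu G K : R} :
  #|B| = f -> robust_agg n f nu F -> (forall i, i \notin B -> v i = gH i) ->
  (#|~: B|%:R)^-1 * \sum_(i in ~: B) norm2 (gH i - avgS (~: B) gH) <= G ^+ 2 ->
  nu <= K -> 0 <= K ->
  norm2 (F v - avgS (~: B) gH) <= K * G ^+ 2.
Proof.
move=> cardB robF honest het nuK K0.
have cardH : #|~: B| = (n - f)%N.
  by have := cardsC B; rewrite cardB card_ord => E; rewrite -[in RHS]E addKn.
have avgE : avgS (~: B) v = avgS (~: B) gH.
  by congr (_ *: _); apply: eq_bigr => i; rewrite inE => /honest.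
have := robF v (~: B) cardH; rewrite avgE.
rewrite (eq_bigr (fun i => norm2 (gH i - avgS (~: B) gH))); last first.
  by move=> i; rewrite inE => /honest ->.
move/le_trans; apply.
set V := _ * _ in het *.
have V0 : 0 <= V by rewrite mulr_ge0 ?invr_ge0 ?ler0n ?sumr_ge0 // => i _; exact: norm2_ge0.
have [nu0|nu0] := lerP 0 nu.
  by apply: le_trans (ler_pM nu0 V0 nuK het) _.
by apply: le_trans (mulr_le0_ge0 (ltW nu0) V0) _; rewrite mulr_ge0 ?sqr_ge0.
Qed.

Lemma sqrt_ratio_ge1 {R : rcfType} {mu L : R} : 0 < mu -> mu <= L -> 1 <= Num.sqrt (L / mu).
Proof.
move=> mu0 muL; have : 1 <= L / mu by rewrite ler_pdivlMr // mul1r.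
by move=> kappa1; rewrite -sqrtr1 ler_sqrt // divr_ge0 // (le_trans (ltW mu0)).
Qed.

Section InexactFastGradient.
Context {R : realType} {d : nat} {f : 'rV[R]_d -> R} {gf : 'rV[R]_d -> 'rV[R]_d}.
Context {mu L delta : R} {g : nat -> 'rV[R]_d} {gamma : nat -> R} {x y z : nat -> 'rV[R]_d}.
Hypothesis mu_gt0 : 0 < mu.
Hypothesis L_gt0 : 0 < L.
Hypothesis f_lower : forall a b, f a + dotv (gf a) (b - a) + mu / 2 * norm2 (b - a) <= f b.
Hypothesis f_upper : forall a b, f b <= f a + dotv (gf a) (b - a) + L / 2 * norm2 (b - a).
Hypothesis oracle_err : forall k, norm2 (g k - gf (x k)) <= delta.

Let Gam k := \sum_(i < k.+1) gamma i.
Let psi k w := L * norm2 (w - x 0%N)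
  + \sum_(i < k.+1) gamma i * (dotv (g i) (w - x i) + mu / 4 * norm2 (w - x i)).

Hypothesis gamma0 : gamma 0%N = 1.
Hypothesis gamma_gt0 : forall k, 0 < gamma k.+1.
Hypothesis gamma_rec : forall k, 2 * L + mu / 2 * Gam k = 2 * L * gamma k.+1 ^+ 2 / Gam k.+1.
Hypothesis y_def : forall k, y k = x k - (2 * L)^-1 *: g k.
Hypothesis z_min : forall k w, psi k (z k) <= psi k w.
Hypothesis x_def : forall k,
  x k.+1 = (1 - gamma k.+1 / Gam k.+1) *: y k + (gamma k.+1 / Gam k.+1) *: z k.

Lemma delta_ge0 : 0 <= delta.
Proof. exact: le_trans (norm2_ge0 _) (oracle_err 0). Qed.

(* Half of the strong convexity pays, via Young, for the oracle error. *)
Lemma inexact_lower_model k w :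
  f (x k) + dotv (g k) (w - x k) + mu / 4 * norm2 (w - x k) - delta / mu <= f w.
Proof.
set e := g k - gf (x k); set h := w - x k.
have young : dotv e h <= mu / 4 * norm2 h + norm2 e / mu.
  by have := dotv_young _ e h (divr_gt0 mu_gt0 (ltr0n _ 4)); rewrite mulrCA divff ?mulr1.
have err : norm2 e / mu <= delta / mu by rewrite ler_pM2r ?invr_gt0 // oracle_err.
have := f_lower (x k) w; rewrite -/h -(subrK (gf (x k)) (g k)) dotvDl -/e.
lra.
Qed.

Lemma inexact_gradient_step k : f (y k) <= f (x k) - norm2 (g k) / (4 * L) + delta / (2 * L).
Proof.
set e := g k - gf (x k); set G2 := norm2 (g k).
have quarter_gt0 : (0 : R) < 1 / 4 by rewrite divr_gt0.
have young : dotv e (g k) <= 1 / 4 * G2 + norm2 e.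
  by have := dotv_young (1 / 4) e (g k) quarter_gt0; rewrite mulrCA divff ?mulr1 // divr1.
have err : norm2 e <= delta := oracle_err k.
have := f_upper (x k) (y k).
have -> : y k - x k = (- (2 * L)^-1) *: g k by rewrite y_def addrAC subrr add0r scaleNr.
have -> : gf (x k) = g k - e by rewrite /e opprB addrC subrK.
rewrite dotvZr norm2Z dotvBl -/G2.
have : (2 * L)^-1 * dotv e (g k) <= (2 * L)^-1 * (1 / 4 * G2 + delta).
  by rewrite ler_pM2l ?invr_gt0 ?mulr_gt0 //; lra.
have -> : f (x k) + - (2 * L)^-1 * (G2 - dotv e (g k)) + L / 2 * ((- (2 * L)^-1) ^+ 2 * G2)
   = f (x k) - 3 / (8 * L) * G2 + (2 * L)^-1 * dotv e (g k).
  by field; rewrite lt0r_neq0.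
have -> : f (x k) - G2 / (4 * L) + delta / (2 * L)
   = f (x k) - 3 / (8 * L) * G2 + (2 * L)^-1 * (1 / 4 * G2 + delta).
  by field; rewrite lt0r_neq0.
lra.
Qed.

Lemma gamma_ge0 i : 0 <= gamma i.
Proof. by case: i => [|i]; [rewrite gamma0 | exact: ltW]. Qed.

Lemma GamS k : Gam k.+1 = Gam k + gamma k.+1.
Proof. exact: big_ord_recr. Qed.

Lemma Gam_gt0 k : 0 < Gam k.
Proof.
elim: k => [|k IH]; first by rewrite /Gam big_ord1 gamma0.
by rewrite GamS addr_gt0.
Qed.

Lemma gamma_recE k : L * gamma k.+1 ^+ 2 = Gam k.+1 * (L + mu / 4 * Gam k).
Proof.
have G0 := lt0r_neq0 (Gam_gt0 k.+1).
apply: (@mulfI _ (2 / Gam k.+1)); first by rewrite mulf_neq0 ?invr_eq0.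
have -> : 2 / Gam k.+1 * (Gam k.+1 * (L + mu / 4 * Gam k)) = 2 * L + mu / 2 * Gam k.
  by field.
by rewrite gamma_rec; field.
Qed.

Let dpsi k v := (2 * L) *: (v - x 0%N)
  + \sum_(i < k.+1) gamma i *: (g i + (mu / 2) *: (v - x i)).

Lemma psi_taylor k w v :
  psi k w - psi k v = (L + mu / 4 * Gam k) * norm2 (w - v) + dotv (dpsi k v) (w - v).
Proof.
have quad p : norm2 (w - p) - norm2 (v - p) = norm2 (w - v) + 2 * dotv (v - p) (w - v).
  by rewrite (norm2_sub_via w v p); ring.
have lin q p : dotv q (w - p) - dotv q (v - p) = dotv q (w - v).
  by rewrite !dotvBr; ring.
rewrite /psi /dpsi.
have -> : forall a b c e : R, a + b - (c + e) = (a - c) + (b - e) by move=> *; ring.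
rewrite -sumrB (eq_bigr (fun i : 'I_k.+1 =>
  mu / 4 * norm2 (w - v) * gamma i + dotv (gamma i *: (g i + (mu / 2) *: (v - x i))) (w - v))).
  rewrite big_split /= -mulr_sumr -dotv_suml dotvDl dotvZl -mulrBr quad /Gam; ring.
move=> i _; rewrite dotvZl dotvDl dotvZl -mulrBr.
have -> : forall a b c e : R, a + c - (b + e) = (a - b) + (c - e) by move=> *; ring.
by rewrite -mulrBr lin quad; field.
Qed.

Lemma psi_quadratic_growth k v :
  psi k (z k) + (L + mu / 4 * Gam k) * norm2 (v - z k) <= psi k v.
Proof.
set a := L + mu / 4 * Gam k.
have a0 : 0 < a by rewrite addr_gt0 // mulr_gt0 ?divr_gt0 ?Gam_gt0.
suff dpsi0 : dpsi k (z k) = 0.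
  by have := psi_taylor k v (z k); rewrite dpsi0 dotv0l addr0 -/a; lra.
(* A step of length 1/(2a) against the gradient would decrease psi k below its minimum. *)
apply: norm2_eq0; set u := dpsi k (z k).
have := psi_taylor k (z k - (2 * a)^-1 *: u) (z k).
have -> : z k - (2 * a)^-1 *: u - z k = - ((2 * a)^-1 *: u) by rewrite addrAC subrr add0r.
rewrite norm2N norm2Z dotvNr dotvZr -/(norm2 u) -/a.
have := z_min k (z k - (2 * a)^-1 *: u).
have : 0 <= norm2 u / (4 * a) by rewrite divr_ge0 ?norm2_ge0 ?mulr_ge0 // ltW.
have -> : a * ((2 * a)^-1 ^+ 2 * norm2 u) + - ((2 * a)^-1 * norm2 u) = - (norm2 u / (4 * a)).
  by field; rewrite lt0r_neq0.
move=> nu0 zmin diff.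
have : norm2 u / (4 * a) = 0 by apply/eqP; rewrite eq_le nu0 andbT; lra.
have a4 : 4 * a != 0 by rewrite lt0r_neq0 // mulr_gt0.
by move/eqP; rewrite mulf_eq0 invr_eq0 (negbTE a4) orbF => /eqP.
Qed.

Lemma psiS k w : psi k.+1 w = psi k w
  + gamma k.+1 * (dotv (g k.+1) (w - x k.+1) + mu / 4 * norm2 (w - x k.+1)).
Proof. by rewrite /psi big_ord_recr /= addrA. Qed.

Lemma coupling_identity k :
  Gam k * dotv (g k.+1) (y k - x k.+1) + gamma k.+1 * dotv (g k.+1) (z k.+1 - x k.+1)
  = gamma k.+1 * dotv (g k.+1) (z k.+1 - z k).
Proof.
have G0 : Gam k + gamma k.+1 != 0 by rewrite lt0r_neq0 // addr_gt0 ?Gam_gt0.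
by rewrite x_def GamS !dotvBr !dotvDr !dotvZr; field.
Qed.

Lemma coupling_young k h :
  - (gamma k.+1 * dotv (g k.+1) h)
    <= (L + mu / 4 * Gam k) * norm2 h + Gam k.+1 * (norm2 (g k.+1) / (4 * L)).
Proof.
have a0 : 0 < L + mu / 4 * Gam k by rewrite addr_gt0 // mulr_gt0 ?divr_gt0 ?Gam_gt0.
have := dotv_young _ (- (gamma k.+1 *: g k.+1)) h a0.
rewrite dotvNl norm2N norm2Z dotvZl.
suff -> : gamma k.+1 ^+ 2 * norm2 (g k.+1) / (4 * (L + mu / 4 * Gam k))
    = Gam k.+1 * (norm2 (g k.+1) / (4 * L)) by [].
have -> : gamma k.+1 ^+ 2 = Gam k.+1 * (L + mu / 4 * Gam k) / L.
  by rewrite -gamma_recE; field; rewrite lt0r_neq0.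
by field; rewrite ?lt0r_neq0 // addr_gt0 ?mulr_gt0 ?Gam_gt0.
Qed.

Let err_rate := delta / mu + delta / (2 * L).

Lemma estimate_invariant k : Gam k * f (y k)
  <= psi k (z k) + \sum_(i < k.+1) gamma i * f (x i) + err_rate * \sum_(i < k.+1) Gam i.
Proof.
have dmu : 0 <= delta / mu by rewrite divr_ge0 ?delta_ge0 // ltW.
have dL : 0 <= delta / (2 * L) by rewrite divr_ge0 ?delta_ge0 // mulr_ge0 // ltW.
elim: k => [|k IH].
  rewrite /psi /Gam !big_ord1 gamma0 !mul1r.
  have := inexact_gradient_step 0.
  have := dotv_young _ (- g 0%N) (z 0%N - x 0%N) L_gt0; rewrite dotvNl norm2N.
  have : 0 <= mu / 4 * norm2 (z 0%N - x 0%N) by rewrite mulr_ge0 ?norm2_ge0 ?divr_ge0 // ltW.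
  rewrite /err_rate; lra.
set G := Gam k; set G' := Gam k.+1; set ga := gamma k.+1; set w := z k.+1.
have GG : G' = G + ga := GamS k.
have G0 : 0 < G := Gam_gt0 k.
have ga0 : 0 < ga := gamma_gt0 k.
have growth := psi_quadratic_growth k w.
have young := coupling_young k (w - z k).
have couple := coupling_identity k.
have lower : G * f (x k.+1) + G * dotv (g k.+1) (y k - x k.+1) - G * (delta / mu) <= G * f (y k).
  rewrite -mulrDr -mulrBr ler_pM2l //.
  have := inexact_lower_model k.+1 (y k).
  have : 0 <= mu / 4 * norm2 (y k - x k.+1) by rewrite mulr_ge0 ?norm2_ge0 ?divr_ge0 // ltW.
  lra.
have upper : G' * f (y k.+1)
    <= G * f (x k.+1) + ga * f (x k.+1) - G' * (norm2 (g k.+1) / (4 * L)) + G' * (delta / (2 * L)).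
  rewrite -mulrDl -GG -mulrBr -mulrDr ler_pM2l ?GG ?addr_gt0 //.
  exact: inexact_gradient_step.
have rate : G * (delta / mu) + G' * (delta / (2 * L)) <= err_rate * G'.
  have : G * (delta / mu) <= G' * (delta / mu) by rewrite ler_wpM2r // GG lerDl ltW.
  rewrite /err_rate; lra.
have : 0 <= ga * (mu / 4 * norm2 (w - x k.+1)).
  by rewrite mulr_ge0 ?mulr_ge0 ?norm2_ge0 ?divr_ge0 // ltW.
rewrite psiS big_ord_recr /= [\sum_(i < k.+2) Gam i]big_ord_recr /= -/G'.
rewrite -/G -/G' -/ga -/w in IH growth young couple *; lra.
Qed.

Lemma estimate_rate k w : Gam k * (f (y k) - f w)
  <= L * norm2 (w - x 0%N) + Gam k * (delta / mu) + err_rate * \sum_(i < k.+1) Gam i.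
Proof.
have models : \sum_(i < k.+1) gamma i * (dotv (g i) (w - x i) + mu / 4 * norm2 (w - x i))
    + \sum_(i < k.+1) gamma i * f (x i) <= Gam k * f w + Gam k * (delta / mu).
  rewrite -big_split -mulrDr /Gam mulr_suml; apply: ler_sum => i _.
  rewrite /= -mulrDr; apply: ler_wpM2l; first exact: gamma_ge0.
  have := inexact_lower_model i w; lra.
have := estimate_invariant k; have := z_min k w; rewrite /psi; lra.
Qed.

Let s := Num.sqrt (L / mu).

Lemma sqrt_kappa_gt0 : 0 < s.
Proof. by rewrite sqrtr_gt0 divr_gt0. Qed.

Lemma Gam_le_gamma_next k : Gam k <= 2 * s * gamma k.+1.
Proof.
have G0 := Gam_gt0 k; have ga0 := gamma_gt0 k.
have s0 := sqrt_kappa_gt0.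
suff : Gam k ^+ 2 <= (2 * s * gamma k.+1) ^+ 2.
  by rewrite ler_pXn2r // nnegrE ?ltW // !mulr_gt0.
have -> : (2 * s * gamma k.+1) ^+ 2 = 4 / mu * (L * gamma k.+1 ^+ 2).
  by rewrite !exprMn sqr_sqrtr ?divr_ge0 ?ltW //; field; rewrite lt0r_neq0.
rewrite gamma_recE GamS.
have -> : Gam k ^+ 2 = 4 / mu * (Gam k * (mu / 4 * Gam k)).
  by field; rewrite lt0r_neq0.
rewrite ler_pM2l ?divr_gt0 //.
have : 0 <= mu / 4 * Gam k by rewrite mulr_ge0 ?divr_ge0 ?ltW.
set m := mu / 4 * Gam k => m0.
have : 0 <= Gam k * L + gamma k.+1 * (L + m).
  by apply: addr_ge0; apply: mulr_ge0; rewrite ?addr_ge0 // ltW.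
lra.
Qed.

Lemma sum_Gam_le k : \sum_(i < k.+1) Gam i <= (1 + 2 * s) * Gam k.
Proof.
elim: k => [|k IH].
  by rewrite big_ord1 mulrDl mul1r lerDl; have := Gam_gt0 0; have := sqrt_kappa_gt0; nra.
rewrite big_ord_recr /= GamS.
have := Gam_le_gamma_next k; have := gamma_gt0 k; have := sqrt_kappa_gt0.
nra.
Qed.

Lemma Gam_geometric_growth k : (1 + (2 * s)^-1) ^+ k <= Gam k.
Proof.
have r0 : 0 <= 1 + (2 * s)^-1 by rewrite addr_ge0 // invr_ge0 mulr_ge0 // ltW // sqrt_kappa_gt0.
elim: k => [|k IH]; first by rewrite expr0 /Gam big_ord1 gamma0.
rewrite GamS exprS.
have : (2 * s)^-1 * Gam k <= gamma k.+1.
  by rewrite mulrC ler_pdivrMr ?mulr_gt0 ?sqrt_kappa_gt0 // mulrC Gam_le_gamma_next.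
have := ler_wpM2l r0 IH.
nra.
Qed.

Lemma inexact_fgm_rate k w : mu <= L ->
  f (y k) - f w <= L * norm2 (w - x 0%N) / Gam k + 6 * s * (delta / mu).
Proof.
move=> muL; have G0 := Gam_gt0 k.
have t0 : 0 <= delta / mu by rewrite divr_ge0 ?delta_ge0 // ltW.
have s1 : 1 <= s := sqrt_ratio_ge1 mu_gt0 muL.
have rate_le : err_rate <= 3 / 2 * (delta / mu).
  have : delta / (2 * L) <= delta / (2 * mu).
    by rewrite ler_wpM2l ?delta_ge0 // lef_pV2 ?posrE ?mulr_gt0 // ler_pM2l.
  have -> : delta / (2 * mu) = 1 / 2 * (delta / mu) by field; rewrite lt0r_neq0.
  rewrite /err_rate; lra.
have sums : err_rate * \sum_(i < k.+1) Gam i <= 3 / 2 * (delta / mu) * ((1 + 2 * s) * Gam k).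
  apply: ler_pM (rate_le) (sum_Gam_le k).
    by rewrite addr_ge0 // divr_ge0 ?delta_ge0 // mulr_ge0 // ltW.
  by rewrite sumr_ge0 // => i _; rewrite ltW ?Gam_gt0.
rewrite -(ler_pM2l G0).
have -> : Gam k * (L * norm2 (w - x 0%N) / Gam k + 6 * s * (delta / mu))
    = L * norm2 (w - x 0%N) + Gam k * (6 * s * (delta / mu)).
  by field; rewrite !lt0r_neq0.
apply: (le_trans (estimate_rate k w)).
have : 0 <= Gam k * (delta / mu) * (3 * s - 5 / 2).
  by apply: mulr_ge0; [exact: mulr_ge0 (ltW G0) t0 | rewrite subr_ge0; lra].
lra.
Qed.

End InexactFastGradient.

Lemma strong_convexity_le_smoothness {R : realType} {d : nat} {f : 'rV[R]_d -> R}
    {gf : 'rV[R]_d -> 'rV[R]_d} {mu L : R} : (0 < d)%N ->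
  (forall a b, f a + dotv (gf a) (b - a) + mu / 2 * norm2 (b - a) <= f b) ->
  (forall a b, f b <= f a + dotv (gf a) (b - a) + L / 2 * norm2 (b - a)) ->
  mu <= L.
Proof.
move=> d0 lower upper; pose v : 'rV[R]_d := const_mx 1.
have nv : 0 < norm2 v.
  rewrite /norm2 /dotv (eq_bigr (fun _ => 1)) => [|j _]; last by rewrite !mxE mulr1.
  by rewrite sumr_const card_ord ltr0n.
have := lower 0 v; have := upper 0 v; rewrite subr0 => up low.
have : mu / 2 * norm2 v <= L / 2 * norm2 v by lra.
by rewrite ler_pM2r // ler_pM2r.
Qed.

Lemma logp_le_geometric_growth {R : realType} {s T : R} {k : nat} :
  1 <= s -> 0 <= T -> 3 * s * (1 + logp T) <= k%:R -> T <= (1 + (2 * s)^-1) ^+ k.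
Proof.
move=> s1; rewrite le0r => /predU1P [-> _|T0 hk].
  by rewrite exprn_ge0 // addr_ge0 // invr_ge0 mulr_ge0 //; lra.
set u := (2 * s + 1)^-1.
have u0 : 0 < u by rewrite invr_gt0; lra.
have expu : expR u <= 1 + (2 * s)^-1. (* exp u <= 1/(1 - u) *)
  have -> : 1 + (2 * s)^-1 = (1 - u)^-1.
    by rewrite /u; field; apply/and3P; split; apply: lt0r_neq0; lra.
  have u1 : u < 1 by rewrite invf_lt1; lra.
  rewrite -lef_pV2 ?posrE ?invr_gt0 ?expR_gt0 ?subr_gt0 // invrK -expRN.
  by have := expR_ge1Dx (- u); rewrite addrC.
have lnT : ln T <= k%:R * u.
  have : (3 * s)^-1 <= u by rewrite /u lef_pV2 ?posrE; lra.
  have : 0 <= k%:R :> R by [].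
  have : ln T <= logp T by rewrite /logp le_max lexx.
  have : 1 + logp T <= k%:R / (3 * s) by rewrite ler_pdivlMr ?mulr_gt0 //; lra.
  nra.
rewrite -(lnK (T0 : T \is Num.pos)); apply: le_trans (_ : expR (k%:R * u) <= _).
  by rewrite ler_expR.
have e0 := expR_ge0 u.
by rewrite expRM_natl lerXn2r ?nnegrE // (le_trans e0 expu).
Qed.

Theorem mainTheorem3 (R : realType) (C0 : R) (hC0 : 0 < C0) :
  exists c C : R, 0 < c /\ 0 < C /\
  forall (d n f : nat) (B : {set 'I_n})
    (Ls : 'I_n -> 'rV[R]_d -> R) (gL : 'I_n -> 'rV[R]_d -> 'rV[R]_d)
    (G mu L nu : R) (xstar : 'rV[R]_d)
    (F : ('I_n -> 'rV[R]_d) -> 'rV[R]_d)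
    (gamma : nat -> R) (x y z : nat -> 'rV[R]_d)
    (inputs : nat -> 'I_n -> 'rV[R]_d),
    (2 * f < n)%N ->
    #|B| = f ->
    (forall i, i \notin B -> is_gradient (Ls i) (gL i)) ->
    let H := ~: B in
    let LH := fun w => (#|H|%:R)^-1 * \sum_(i in H) Ls i w in
    let gLH := fun w => avgS H (fun i => gL i w) in
    (forall w, (#|H|%:R)^-1 * \sum_(i in H) norm2 (gL i w - gLH w) <= G ^+ 2) ->
    0 < mu -> 0 < L ->
    strongly_convex mu LH ->
    Lsmooth L LH ->
    (forall w, LH xstar <= LH w) ->
    robust_agg n f nu F ->
    nu <= C0 * ((f%:R : R) / (n - 2 * f)%N%:R) ->
    (forall k i, i \notin B -> inputs k i = gL i (x k)) ->
    let g := fun k => F (inputs k) in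
    let Gam := fun k => \sum_(i < k.+1) gamma i in
    gamma 0%N = 1 ->
    (forall k, 0 < gamma k.+1) ->
    (forall k, 2 * L + mu / 2 * Gam k = 2 * L * gamma k.+1 ^+ 2 / Gam k.+1) ->
    (forall k, y k = x k - (2 * L)^-1 *: g k) ->
    (forall k w,
        L * norm2 (z k - x 0%N)
        + \sum_(i < k.+1) gamma i * (dotv (g i) (z k - x i) + mu / 4 * norm2 (z k - x i))
      <= L * norm2 (w - x 0%N)
        + \sum_(i < k.+1) gamma i * (dotv (g i) (w - x i) + mu / 4 * norm2 (w - x i))) ->
    (forall k, x k.+1 = (1 - gamma k.+1 / Gam k.+1) *: y k + (gamma k.+1 / Gam k.+1) *: z k) ->
    forall (eps : R) (k : nat), 0 < eps ->
      c * Num.sqrt (L / mu) * (1 + logp (L * norm2 (x 0%N - xstar) / eps)) <= k%:R ->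
      LH (y k) - LH xstar <=
        eps + C * (Num.sqrt (L / mu) / mu) * ((f%:R : R) / (n - 2 * f)%N%:R) * G ^+ 2.
Proof.
exists 3, (6 * C0); split=> //; split; first by rewrite mulr_gt0.
move=> d n f B Ls gL G mu L nu xstar F gamma x y z inputs _ cardB gradL H LH gLH het
  mu0 L0 scLH [gf [gradf lipf]] _ robF nu_le honest g Gam gamma0 gamma_gt0 gamma_rec
  y_def z_min x_def eps k eps0 hk.
set rho := _ / _ in nu_le *; set s := Num.sqrt (L / mu) in hk *.
have rho0 : 0 <= rho by rewrite divr_ge0 ?ler0n.
have delta0 : 0 <= C0 * rho * G ^+ 2 := mulr_ge0 (mulr_ge0 (ltW hC0) rho0) (sqr_ge0 G).
have rhsE : 6 * C0 * (s / mu) * rho * G ^+ 2 = 6 * s * (C0 * rho * G ^+ 2 / mu).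
  by field; rewrite lt0r_neq0.
(* On 'rV_0 the bound mu <= L cannot be derived, but there y k = xstar. *)
have [d0|d_gt0] := posnP d.
  subst d; rewrite [y k]thinmx0 [xstar]thinmx0 subrr rhsE addr_ge0 ?(ltW eps0) //.
  exact: mulr_ge0 (mulr_ge0 (ler0n _ 6) (sqrtr_ge0 _)) (divr_ge0 delta0 (ltW mu0)).
have gfE w : gf w = gLH w.
  by apply: (is_gradient_avg _ gradf) => i; rewrite inE => /gradL.
have lower := strongly_convex_first_order gradf (ltW mu0) scLH.
have upper := descent_lemma gradf L0 lipf (ltW mu0) scLH.
have err j : norm2 (g j - gf (x j)) <= C0 * rho * G ^+ 2.
  rewrite gfE; apply: (robust_agg_honest_error cardB robF (honest j) (het (x j)) nu_le).
  exact: mulr_ge0 (ltW hC0) rho0.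
have muL := strong_convexity_le_smoothness d_gt0 lower upper.
have rate := inexact_fgm_rate mu0 L0 lower upper err gamma0 gamma_gt0 gamma_rec
  y_def z_min x_def k xstar muL.
have s1 : 1 <= s := sqrt_ratio_ge1 mu0 muL.
set T := L * norm2 (x 0%N - xstar) / eps in hk.
have T0 : 0 <= T by rewrite divr_ge0 ?mulr_ge0 ?norm2_ge0 // ltW.
have T_le_Gam : T <= Gam k.
  apply: le_trans (logp_le_geometric_growth s1 T0 hk) _.
  exact: Gam_geometric_growth mu0 L0 gamma0 gamma_gt0 gamma_rec k.
rewrite rhsE; apply: le_trans rate _; rewrite lerD2r norm2_subC.
rewrite ler_pdivrMr ?(Gam_gt0 gamma0 gamma_gt0) // [eps * _]mulrC.
by rewrite -(divfK (lt0r_neq0 eps0) (L * _)) -/T ler_pM2r.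
Qed.
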